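(* If $G$ is a strongly regular graph with parameters $(n,r,e,f)$ and $n \ge 3$, then $\lambda_3(G) < \frac{n}{3}$.
   Context: A graph $G$ is strongly regular with parameters $(n,r,e,f)$ if it has $n$ vertices, is $r$-regular, every two adjacent vertices have exactly $e$ common neighbours, and every two distinct non-adjacent vertices have exactly $f$ common neighbours (disconnected graphs and graphs with disconnected complement are allowed). $\lambda_3(G)$ is the third largest eigenvalue (with multiplicity) of the adjacency matrix of $G$. *)

From mathcomp Require Import all_boot all_order all_algebra.
Set Implicit Arguments. Unset Strict Implicit. Unset Printing Implicit Defensive.
Import Order.TTheory GRing.Theory Num.Theory.
Local Open Scope ring_scope.

Definition simple_graph (n : nat) (adj : rel 'I_n) : Prop :=
  (forall i j, adj i j = adj j i) /\ (forall i, ~~ adj i i).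

Definition strongly_regular (n : nat) (adj : rel 'I_n) (r e f : nat) : Prop :=
  [/\ simple_graph adj,
      (forall i, #|[set j | adj i j]| = r),
      (forall i j, i != j -> adj i j -> #|[set k | adj i k && adj j k]| = e)
    & (forall i j, i != j -> ~~ adj i j -> #|[set k | adj i k && adj j k]| = f)].

Definition adj_mx (R : nzRingType) (n : nat) (adj : rel 'I_n) : 'M[R]_n :=
  \matrix_(i, j) (adj i j)%:R.

(* s is the spectrum of A listed with multiplicity in nonincreasing order:
   the characteristic polynomial of A factors as prod (X - x) over s. *)
Definition sorted_spectrum (R : rcfType) (n : nat) (A : 'M[R]_n) (s : seq R) :=
  sorted >=%R s /\ char_poly A = \prod_(x <- s) ('X - x%:P).

From mathcomp Require Import all_boot all_order all_algebra.
From mathcomp Require Import ring lra zify.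
Set Implicit Arguments. Unset Strict Implicit. Unset Printing Implicit Defensive.
Import Order.TTheory GRing.Theory Num.Theory.
Local Open Scope ring_scope.

(* The adjacency matrix A of a strongly regular graph satisfies
   A^2 = (e - f) A + (r - f) I + f J and A J = J A = r J, so every eigenvalue is r or a
   root of q = X^2 - (e - f) X - (r - f); the traces of A and A^2 give sum x = 0 and
   sum x^2 = n r.  Suppose three eigenvalues are at least n/3.  If f = 0 the graph is a
   union of cliques, the spectrum is r^m (-1)^(n-m) with m (r + 1) = n, and m >= 3 is
   impossible.  If f > 0, the sum of q over the spectrum shows that r is simple, so the
   positive root θ of q is at least n/3 and has multiplicity at least 2, the other root
   τ = (e - f) - θ being <= 0.  Multiplicity 3 already exceeds sum x^2 = n r.  With
   multiplicity exactly 2 the two trace equations for the spectrum r, θ, θ, τ^(n-3) are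
   contradictory: directly for n = 5, and otherwise because θ and τ must be integers. *)

Section Spectrum.
Variables (R : comNzRingType) (n : nat) (A : 'M[R]_n) (s : seq R).
Hypothesis char_poly_A : char_poly A = \prod_(x <- s) ('X - x%:P).

Lemma size_spectrum : size s = n.
Proof. by have := size_char_poly A; rewrite char_poly_A size_prod_XsubC => -[]. Qed.

Lemma sum_spectrum : \sum_(x <- s) x = \tr A.
Proof.
case: n A char_poly_A size_spectrum => [|m] B charB size_s.
  by rewrite (size0nil size_s) big_nil /mxtrace big_ord0.
have := char_poly_trace B (ltn0Sn m); rewrite charB -{1}size_s.
by rewrite coefPn_prod_XsubC ?size_s // => /oppr_inj.
Qed.

(* [char_poly A (X) * char_poly A (-X)] is, up to sign, [char_poly (A *m A) (X^2)],
   because [(X - A) (X + A) = X^2 - A^2]. *)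
Lemma char_poly_sqr : char_poly (A *m A) = \prod_(x <- s) ('X - (x ^+ 2)%:P).
Proof.
pose cN := comp_poly (- 'X : {poly R}); pose c2 := comp_poly ('X^2 : {poly R}).
have cN_char : map_mx cN (char_poly_mx A) = - ('X%:M + map_mx polyC A).
  apply/matrixP => i j; rewrite !mxE /cN.
  by case: (i == j); rewrite /= ?mulr1n ?mulr0n raddfB /= ?comp_polyX ?comp_polyC ?comp_poly0; ring.
have c2_char : map_mx c2 (char_poly_mx (A *m A)) = 'X^2%:M - map_mx polyC (A *m A).
  apply/matrixP => i j; rewrite !mxE /c2.
  by case: (i == j); rewrite /= ?mulr1n ?mulr0n raddfB /= ?comp_polyX ?comp_polyC ?comp_poly0.
have diff_sqr : char_poly_mx A *m ('X%:M + map_mx polyC A) = 'X^2%:M - map_mx polyC (A *m A).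
  rewrite /char_poly_mx mulmxDr !mulmxBl -scalar_mxM.
  by rewrite map_mxM scalar_mxC expr2 addrA subrK.
have c2_eq : c2 (char_poly (A *m A)) = c2 (\prod_(x <- s) ('X - (x ^+ 2)%:P)).
  have det_eq : \det (char_poly_mx A *m - map_mx cN (char_poly_mx A)) =
                \det (map_mx c2 (char_poly_mx (A *m A))).
    by rewrite cN_char opprK diff_sqr c2_char.
  rewrite det_mulmx -scaleN1r detZ !det_map_mx in det_eq.
  rewrite -[c2 _]det_eq -/(char_poly A) char_poly_A /c2 !rmorph_prod /=.
  rewrite mulrCA -size_spectrum -big_split /=.
  elim: (s) => [|x t IH]; first by rewrite !big_nil mulr1.
  rewrite !big_cons /= exprS -IH !raddfB /= !comp_polyX !comp_polyC rmorphXn /=.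
  set P := \prod_(j <- t) _; set Q := (-1) ^+ size t; ring.
apply/polyP => i; have := congr1 (fun p : {poly R} => p`_(2 * i)) c2_eq.
by rewrite /c2 /= !coef_comp_poly_Xn // dvdn_mulr // mulKn.
Qed.

End Spectrum.

Lemma sum_sqr_spectrum (R : comNzRingType) n (A : 'M[R]_n) (s : seq R) :
  char_poly A = \prod_(x <- s) ('X - x%:P) -> \sum_(x <- s) x ^+ 2 = \tr (A *m A).
Proof.
move=> /char_poly_sqr; rewrite -(big_map (fun x => x ^+ 2) xpredT (fun y => 'X - y%:P)).
by move=> /sum_spectrum; rewrite big_map.
Qed.

Lemma eigenvalue_root_cubic (F : fieldType) n (A : 'M[F]_n) (a b c x : F) :
  (A *m A - b *: A - c%:M) *m (A - a%:M) = 0 -> eigenvalue A x ->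
  (x ^+ 2 - b * x - c) * (x - a) = 0.
Proof.
move=> annih /eigenvalueP[v vA v_neq0].
have vQ : v *m (A *m A - b *: A - c%:M) = (x ^+ 2 - b * x - c) *: v.
  rewrite !mulmxBr mulmxA vA -scalemxAl vA -scalemxAr vA mul_mx_scalar.
  by rewrite !scalerA -!scalerBl mulrC.
have /eqP := congr1 (mulmx v) annih.
rewrite mulmxA vQ -scalemxAl mulmxBr vA mul_mx_scalar -scalerBl scalerA mulmx0.
by rewrite scalemx_eq0 (negbTE v_neq0) orbF => /eqP.
Qed.

Lemma sum_count_mem (V : nmodType) (T : eqType) (t s : seq T) (g : T -> V) :
  uniq t -> {in s, forall x, x \notin t -> g x = 0} ->
  \sum_(x <- s) g x = \sum_(y <- t) g y *+ count_mem y s.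
Proof.
move=> t_uniq; elim: s => [|x s IHs] g_supp.
  by rewrite big_nil big1 // => y _; rewrite mulr0n.
rewrite big_cons IHs => [|y ys]; last by apply: g_supp; rewrite inE ys orbT.
under [RHS]eq_bigr => y _ do rewrite [count_mem _ _]/= mulrnDr.
rewrite big_split /=; congr (_ + _); have [xt | xNt] := boolP (x \in t).
  rewrite (bigD1_seq x) //= eqxx mulr1n big1 ?addr0 // => y.
  by rewrite eq_sym => /negbTE ->; rewrite mulr0n.
rewrite g_supp ?mem_head // big1_seq // => y /andP[_ yt].
have /negbTE -> : x != y by apply: contraNneq xNt => ->.
by rewrite mulr0n.
Qed.

Lemma count_le_sum_count_mem (T : eqType) (P : pred T) (t s : seq T) :
  {in s, forall x, P x -> x \in t} -> (count P s <= \sum_(y <- t) count_mem y s)%N.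
Proof.
elim: s => //= x s IHs P_t; rewrite big_split leq_add //=; last first.
  by apply: IHs => y ys; apply: P_t; rewrite inE ys orbT.
case Px: (P x) => //; rewrite (big_rem x) ?P_t ?mem_head //= eqxx.
exact: leq_addr.
Qed.

Lemma sum_sqr_ge_count (R : realDomainType) (s : seq R) (a : R) :
  0 <= a -> (count (>= a) s)%:R * a ^+ 2 <= \sum_(x <- s) x ^+ 2.
Proof.
move=> a_ge0; elim: s => [|x s IHs] /=; first by rewrite mul0r big_nil.
rewrite big_cons natrD mulrDl lerD //; case: (lerP a x) => [a_le_x | _] /=.
  by rewrite mul1r lerXn2r // nnegrE (le_trans a_ge0).
by rewrite mul0r sqr_ge0.
Qed.

Lemma count_ge_nth (R : numDomainType) (s : seq R) (a : R) k :
  sorted >=%R s -> (k < size s)%N -> a <= s`_k -> (k < count (>= a) s)%N.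
Proof.
move=> s_sorted k_lt a_le; rewrite -[k.+1](size_takel (n0 := k.+1) (s := s)) //.
have: all (>= a) (take k.+1 s).
  apply/(all_nthP 0) => i; rewrite size_takel // => i_lt; rewrite nth_take //.
  apply: (le_trans a_le); apply: (sorted_leq_nth ge_trans ge_refl) => //.
  by rewrite inE (leq_ltn_trans _ k_lt).
rewrite all_count => /eqP <-; apply: leq_count_subseq; exact: take_subseq.
Qed.

(* A rational root [K / d] of the monic [X^2 - b X - c] is an integer. *)
Lemma dvdz_monic_quadratic (K d b c : int) :
  d != 0 -> K ^+ 2 = d * (b * K + c * d) -> (d %| K)%Z.
Proof.
move=> d_neq0 K_sqr; set g := gcdz K d.
have g_neq0 : g != 0 by rewrite gcdz_eq0 negb_and d_neq0 orbT.
have K_eq : K = (K %/ g)%Z * g by rewrite divzK ?dvdz_gcdl.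
have d_eq : d = (d %/ g)%Z * g by rewrite divzK ?dvdz_gcdr.
move: (K %/ g)%Z (d %/ g)%Z K_eq d_eq => K' d' K_eq d_eq.
have coprime_d'K' : coprimez d' K'.
  have : gcdz K' d' * `|g|%:Z = 1 * g by rewrite mulz_gcdl -K_eq -d_eq mul1r.
  have -> : `|g|%:Z = g by [].
  by move=> /(mulIf g_neq0) gcd1; rewrite coprimez_sym /coprimez gcd1.
clearbody g.
have K'_sqr : K' * K' = d' * (b * K' + c * d').
  apply: (mulIf (mulf_neq0 g_neq0 g_neq0)).
  have sqr_eq : (K' * g) ^+ 2 = d' * g * (b * (K' * g) + c * (d' * g)).
    by rewrite -K_eq -d_eq.
  by transitivity ((K' * g) ^+ 2); [ring | rewrite sqr_eq; ring].
rewrite K_eq d_eq dvdz_mul2r // -(Gauss_dvdzr _ coprime_d'K') K'_sqr.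
exact: dvdz_mulr.
Qed.

Lemma monic_quadratic_root_int (R : numDomainType) (b c d K : int) (x : R) :
  d != 0 -> d%:~R * x = K%:~R -> x ^+ 2 = b%:~R * x + c%:~R -> x = (K %/ d)%Z%:~R.
Proof.
move=> d_neq0 dx_eq x_sqr.
have K_sqr : K ^+ 2 = d * (b * K + c * d).
  apply: (@intr_inj R); rewrite rmorphXn !rmorphM rmorphD !rmorphM /= -dx_eq.
  by rewrite exprMn x_sqr; ring.
have := dvdz_monic_quadratic d_neq0 K_sqr; rewrite dvdz_eq => /eqP K_eq.
apply: (@mulfI _ d%:~R); first by rewrite intr_eq0.
by rewrite dx_eq -{1}K_eq rmorphM mulrC.
Qed.

(* The spectrum [r, θ, θ, τ, ..., τ] with [θ + τ = b]: for [n != 5] the distinct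
   multiplicities [2] and [n - 3] make [θ] rational, hence an integer. *)
Lemma double_eigenvalue_lt (R : realFieldType) (n r : nat) (b c : int) (θ : R) :
  let τ := b%:~R - θ in
  (3 <= n)%N -> (r < n)%N -> θ ^+ 2 = b%:~R * θ + c%:~R -> τ <= 0 ->
  r%:R + 2 * θ + (n%:R - 3) * τ = 0 ->
  r%:R ^+ 2 + 2 * θ ^+ 2 + (n%:R - 3) * τ ^+ 2 = n%:R * r%:R ->
  θ < n%:R / 3.
Proof.
move=> τ n_ge3 r_lt_n θ_root τ_le0 sum_eq sum_sqr_eq; rewrite ltNge; apply/negP => θ_large.
have n_ge3R : 3 <= n%:R :> R by rewrite (ler_nat R 3).
have r_ge0 : 0 <= r%:R :> R := ler0n _ _.
have r_le : r%:R <= n%:R - 1 :> R by rewrite lerBrDr natr1 ler_nat.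
have θ_gt0 : 0 < θ by apply: lt_le_trans θ_large; lra.
have [n5 | n_neq5] := eqVneq n 5.
  move: n5 sum_eq sum_sqr_eq θ_large => -> sum_eq sum_sqr_eq θ_large.
  have : 0 <= (θ - 5 / 3) * - τ by rewrite mulr_ge0 ?oppr_ge0 // subr_ge0.
  have := sqr_ge0 (θ - 5 / 3); have := sqr_ge0 (θ + τ); have := sqr_ge0 (τ + 35 / 18).
  nra.
pose d : int := n%:Z - 5; pose K : int := r%:Z + (n%:Z - 3) * b.
have [z θ_eq] : exists z : int, θ = z%:~R.
  exists (K %/ d)%Z; apply: (monic_quadratic_root_int (c := c)); rewrite ?θ_root //.
    by rewrite subr_eq0; apply: contra_neq n_neq5; case.
  by rewrite /d /K !rmorphD !rmorphM !rmorphB /=; move: sum_eq; rewrite /τ; lra.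
have τ_int : τ = (b - z)%:~R by rewrite /τ θ_eq rmorphB.
have τ_neq0 : τ != 0 by apply/eqP => τ0; move: sum_eq; rewrite τ0; lra.
have w_lt0 : b - z < 0 by rewrite -(ltr_int R) -τ_int lt_neqAle τ_neq0.
have [w_m1 | w_le_m2] : b - z = -1 \/ b - z <= -2 by lia.
  by move: sum_eq sum_sqr_eq; rewrite τ_int w_m1; nra.
have τ_le_m2 : τ <= -2 by rewrite τ_int -[-2]/((-2)%:~R) ler_int.
by move: sum_eq sum_sqr_eq; nra.
Qed.

Section StronglyRegularSpectrum.

Variables (R : realFieldType) (n r f : nat) (b : int) (s : seq R).

Let N : R := n%:R / 3.
Let q (x : R) : R := x ^+ 2 - b%:~R * x - (r%:R - f%:R).

Hypotheses (size_s : size s = n) (r_lt_n : (r < n)%N) (f_le_r : (f <= r)%N).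
Hypotheses (sum_s : \sum_(x <- s) x = 0) (sum_sqr_s : \sum_(x <- s) x ^+ 2 = n%:R * r%:R).
Hypotheses (q_r : q r%:R = n%:R * f%:R) (root_s : {in s, forall x, q x * (x - r%:R) = 0}).

Let n_gt0 : (0 < n)%N := leq_ltn_trans (leq0n r) r_lt_n.

Let N_gt0 : 0 < N.
Proof. by rewrite divr_gt0 ?ltr0n. Qed.

Let sum_const (a : R) : \sum_(x <- s) a = a *+ n.
Proof. by rewrite big_const_seq count_predT size_s iter_addr_0. Qed.

Let n_eq : n%:R = 3 * N.
Proof. by rewrite /N mulrCA divff ?mulr1 // pnatr_eq0. Qed.

Lemma count_large_lt3_deg_small : r%:R < N -> (count (>= N) s < 3)%N.
Proof.
move=> r_lt_N; rewrite ltnNge; apply/negP => large3.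
have : 3%:R * N ^+ 2 <= 3 * N * r%:R.
  rewrite -n_eq -sum_sqr_s; apply: le_trans (sum_sqr_ge_count _ (ltW N_gt0)).
  by rewrite ler_wpM2r ?sqr_ge0 // ler_nat.
by rewrite -mulrA ler_pM2l // expr2 ler_pM2l // leNgt r_lt_N.
Qed.

Lemma count_large_lt3_f0 : f = 0%N -> (count (>= N) s < 3)%N.
Proof.
move=> f0; have [r_lt_N | N_le_r] := ltP r%:R N; first exact: count_large_lt3_deg_small.
have r_gt0 : 0 < r%:R :> R := lt_le_trans N_gt0 N_le_r.
have q_fact x : q x = (x - r%:R) * (x + 1).
  have : r%:R * (r%:R - b%:~R - 1) = 0 :> R.
    by transitivity (q r%:R); [rewrite /q f0; ring | rewrite q_r f0 mulr0].
  move/eqP; rewrite mulf_eq0 gt_eqF //= => /eqP b_eq.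
  rewrite /q (_ : b%:~R = r%:R - 1) ?f0; first by ring.
  by move: b_eq; lra.
have r_neq : r%:R != -1 :> R by rewrite gt_eqF // (lt_trans (ltrN10 R)).
have s_vals : {in s, forall x, x \in [:: r%:R; -1]}.
  move=> x /root_s /eqP; rewrite q_fact !mulf_eq0 !inE subr_eq0 addr_eq0.
  by rewrite orbC orbA orbb.
have uniq_vals : uniq [:: r%:R; -1 : R] by rewrite /= inE r_neq.
have supp (g : R -> R) : {in s, forall x, x \notin [:: r%:R; -1] -> g x = 0}.
  by move=> x /s_vals ->.
have size_eq := sum_count_mem uniq_vals (supp (fun=> 1)).
have sum_eq := sum_count_mem uniq_vals (supp id).
rewrite sum_const !big_cons big_nil addr0 /= in size_eq.
rewrite sum_s !big_cons big_nil addr0 /= in sum_eq.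
set m := count_mem r%:R s in size_eq sum_eq *.
have large_r : (count (>= N) s <= m)%N.
  rewrite (leq_trans (count_le_sum_count_mem (t := [:: r%:R]) _)) ?big_seq1 // => x xs large.
  move: (s_vals x xs); rewrite !inE => /orP[// | /eqP x_eq].
  by move: large; rewrite x_eq leNgt (lt_trans (ltrN10 R)).
rewrite ltnNge; apply/negP => /leq_trans/(_ large_r); rewrite -(ler_nat R) => m_ge3.
have : 0 <= (m%:R - 3) * (r%:R + 1) :> R by rewrite mulr_ge0 // ?subr_ge0 ?addr_ge0.
move: size_eq sum_eq; rewrite n_eq; lra.
Qed.

Lemma count_mem_degree : (0 < f)%N -> count_mem r%:R s = 1%N.
Proof.
move=> f_gt0; have nf_neq0 : n%:R * f%:R != 0 :> R by rewrite mulf_neq0 ?pnatr_eq0 -?lt0n.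
have : \sum_(x <- s) q x = n%:R * f%:R.
  by rewrite /q !sumrB -mulr_sumr sum_s sum_sqr_s !sum_const; ring.
rewrite (@sum_count_mem _ _ [:: r%:R]) // ?big_seq1 => [|x /root_s].
  by rewrite q_r -{2}[n%:R * f%:R]mulr1n => /(mulrIn nf_neq0).
move=> /eqP; rewrite mulf_eq0 => /orP[/eqP // | ]; rewrite subr_eq0 => /eqP->.
by rewrite mem_head.
Qed.

Lemma spectrum_three_values (θ : R) : (0 < f)%N -> θ \in s -> θ != r%:R -> 0 < θ ->
  let τ := b%:~R - θ in
  [/\ q θ = 0, τ <= 0, uniq [:: r%:R; θ; τ] & {in s, forall x, x \in [:: r%:R; θ; τ]}].
Proof.
move=> f_gt0 θs θ_neq_r θ_gt0 τ.
have qθ : q θ = 0.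
  by move/eqP: (root_s θs); rewrite mulf_eq0 [θ - _ == 0]subr_eq0 (negbTE θ_neq_r) orbF => /eqP.
have q_fact x : q x = (x - θ) * (x - τ).
  by rewrite -[LHS]subr0 -qθ /q /τ; ring.
have τ_le0 : τ <= 0.
  have : θ * τ = f%:R - r%:R by move: qθ; rewrite /q /τ => /eqP; rewrite -subr_eq0 => /eqP; lra.
  by rewrite -(pmulr_rle0 _ θ_gt0) => ->; rewrite subr_le0 ler_nat.
split=> //.
  rewrite /= !inE negb_or eq_sym θ_neq_r !gt_eqF ?(le_lt_trans τ_le0) //.
  by rewrite ltr0n (leq_trans f_gt0 f_le_r).
move=> x /root_s /eqP; rewrite q_fact !mulf_eq0 !subr_eq0 !inE.
by rewrite orbC orbA.
Qed.

Lemma spectrum_multiplicities (θ : R) : (0 < f)%N -> θ \in s -> θ != r%:R -> 0 < θ ->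
  let τ := b%:~R - θ in let mθ := (count_mem θ s)%:R in let mτ := (count_mem τ s)%:R in
  [/\ n%:R = 1 + mθ + mτ, r%:R + mθ * θ + mτ * τ = 0
     & r%:R ^+ 2 + mθ * θ ^+ 2 + mτ * τ ^+ 2 = n%:R * r%:R].
Proof.
move=> f_gt0 θs θ_neq_r θ_gt0 τ mθ mτ.
have [_ _ vals_uniq s_vals] := spectrum_three_values f_gt0 θs θ_neq_r θ_gt0.
have supp (g : R -> R) : {in s, forall x, x \notin [:: r%:R; θ; τ] -> g x = 0}.
  by move=> x /s_vals ->.
have sum_eq := sum_count_mem vals_uniq (supp (fun=> 1)).
have sum_x_eq := sum_count_mem vals_uniq (supp id).
have sum_sqr_eq := sum_count_mem vals_uniq (supp (fun x => x ^+ 2)).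
rewrite sum_const !big_cons big_nil addr0 (count_mem_degree f_gt0) in sum_eq.
rewrite sum_s !big_cons big_nil addr0 (count_mem_degree f_gt0) in sum_x_eq.
rewrite sum_sqr_s !big_cons big_nil addr0 (count_mem_degree f_gt0) in sum_sqr_eq.
rewrite -/τ in sum_eq sum_x_eq sum_sqr_eq.
rewrite -[θ *+ _]mulr_natl -[τ *+ _]mulr_natl mulr1n in sum_x_eq.
rewrite -[θ ^+ 2 *+ _]mulr_natl -[τ ^+ 2 *+ _]mulr_natl mulr1n in sum_sqr_eq.
by split; [rewrite sum_eq | rewrite [RHS]sum_x_eq | rewrite sum_sqr_eq]; rewrite addrA.
Qed.

Lemma count_large_lt3_f_gt0 : (0 < f)%N -> (count (>= N) s < 3)%N.
Proof.
move=> f_gt0; rewrite ltnNge; apply/negP => large3.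
have [θ θs /andP[θ_large θ_neq_r]] : exists2 θ, θ \in s & (N <= θ) && (θ != r%:R).
  apply/hasP; apply: contraTT large3 => /hasPn large_r; rewrite -ltnNge ltnS.
  rewrite -(count_mem_degree f_gt0).
  rewrite (leq_trans (count_le_sum_count_mem (t := [:: r%:R]) _)) ?big_seq1 // => x /large_r.
  by rewrite negb_and negbK inE => /orP[/negP|].
have θ_gt0 := lt_le_trans N_gt0 θ_large.
have [qθ τ_le0 _ s_vals] := spectrum_three_values f_gt0 θs θ_neq_r θ_gt0.
have [size_eq sum_eq sum_sqr_eq] := spectrum_multiplicities f_gt0 θs θ_neq_r θ_gt0.
set τ := b%:~R - θ in τ_le0 s_vals size_eq sum_eq sum_sqr_eq.
set mθ := count_mem θ s in size_eq sum_eq sum_sqr_eq *.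
set mτ := count_mem τ s in size_eq sum_eq sum_sqr_eq.
have mθ_ge2 : (2 <= mθ)%N.
  rewrite -(leq_add2l (count_mem r%:R s)) {1}(count_mem_degree f_gt0).
  apply: leq_trans large3 _.
  rewrite (leq_trans (count_le_sum_count_mem (t := [:: r%:R; θ]) _)) ?big_cons ?big_nil ?addn0 //.
  move=> x /s_vals; rewrite !inE => /or3P[-> // | -> | /eqP->]; first by rewrite orbT.
  by rewrite leNgt (le_lt_trans τ_le0 N_gt0).
have [mθ_ge3 | mθ_le2] := leqP 3 mθ.
  have : 3 * θ ^+ 2 <= mθ%:R * θ ^+ 2 by rewrite ler_wpM2r ?sqr_ge0 // (ler_nat R 3).
  have : 0 <= (θ - N) * (θ + N) by rewrite mulr_ge0 ?subr_ge0 // addr_ge0 // ltW.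
  have := mulr_ge0 (ler0n R mτ) (sqr_ge0 τ); have := sqr_ge0 (2 * r%:R - 3 * N : R).
  have := mulr_gt0 N_gt0 N_gt0; move: sum_sqr_eq; rewrite n_eq; nra.
have mθ2 : mθ = 2%N by apply/eqP; rewrite eqn_leq -ltnS mθ_le2.
rewrite mθ2 in size_eq sum_eq sum_sqr_eq.
have mτ_eq : mτ%:R = n%:R - 3 :> R by rewrite size_eq; ring.
rewrite mτ_eq in sum_eq sum_sqr_eq.
have θ_root : θ ^+ 2 = b%:~R * θ + (r%:Z - f%:Z)%:~R.
  by move: qθ; rewrite /q rmorphB /= !pmulrn; lra.
suff : θ < N by rewrite ltNge θ_large.
apply: (double_eigenvalue_lt _ r_lt_n θ_root τ_le0); last 2 first.
- by move: sum_eq; rewrite /τ; lra.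
- by move: sum_sqr_eq; rewrite /τ; lra.
by rewrite -(ler_nat R) -subr_ge0 -mτ_eq.
Qed.

Lemma spectrum_nth2_lt : (3 <= n)%N -> sorted >=%R s -> s`_2 < N.
Proof.
move=> n_ge3 s_sorted.
have count_lt3 : (count (>= N) s < 3)%N.
  by case: (posnP f) => [/count_large_lt3_f0 | /count_large_lt3_f_gt0].
rewrite ltNge; apply: contraTN count_lt3 => large.
by rewrite -leqNgt (count_ge_nth s_sorted _ large) // size_s.
Qed.

End StronglyRegularSpectrum.

Section StronglyRegularGraph.

Variables (n : nat) (adj : rel 'I_n) (r e f : nat).
Hypothesis srg : strongly_regular adj r e f.

(* For complete graphs the [f] condition is vacuous, so [f] can be reset to [0]. *)
Lemma strongly_regular_f_le_deg : exists2 f', strongly_regular adj r e f' & (f' <= r)%N.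
Proof.
have [simple_adj deg common_adj common_nonadj] := srg.
case: (boolP [exists i, exists j, (i != j) && ~~ adj i j]).
  move=> /existsP[i /existsP[j /andP[i_neq_j nadj_ij]]].
  exists f => //; rewrite -(common_nonadj _ _ i_neq_j nadj_ij) -(deg i).
  by apply/subset_leq_card/subsetP => k; rewrite !inE => /andP[].
move=> complete; exists 0%N => //; split=> // i j i_neq_j nadj_ij; case/negP: complete.
by apply/existsP; exists i; apply/existsP; exists j; rewrite i_neq_j.
Qed.

Lemma strongly_regular_deg_lt : (0 < n)%N -> (r < n)%N.
Proof.
have [[_ adj_irr] deg _ _] := srg; move=> n_gt0; pose i0 : 'I_n := Ordinal n_gt0.
rewrite -(deg i0) -[n in (_ < n)%N]card_ord -cardsT; apply: proper_card; rewrite properT.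
by apply/negP => /eqP/setP/(_ i0); rewrite !inE (negbTE (adj_irr _)).
Qed.

Variable R : comNzRingType.
Local Notation A := (adj_mx R adj).
Local Notation J := (const_mx 1 : 'M[R]_n).

Lemma adj_mx_sqrE i j : (A *m A) i j = #|[set k | adj i k && adj j k]|%:R.
Proof.
have [[adj_sym _] _ _ _] := srg; rewrite !mxE -sum1_card natr_sum [RHS]big_mkcond /=.
by apply: eq_bigr => k _; rewrite !mxE inE (adj_sym k j) -natrM mulnb; case: (_ && _).
Qed.

Lemma adj_mx_const1 : A *m J = r%:R *: J.
Proof.
have [_ deg _ _] := srg; apply/matrixP => i j; rewrite !mxE -(deg i) -sum1_card natr_sum.
by rewrite mulr1 [RHS]big_mkcond; apply: eq_bigr => k _; rewrite !mxE inE mulr1; case: adj.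
Qed.

Lemma tr_adj_mx : A^T = A.
Proof. by have [[adj_sym _] _ _ _] := srg; apply/matrixP => i j; rewrite !mxE adj_sym. Qed.

Lemma const1_adj_mx : J *m A = r%:R *: J.
Proof.
apply: trmx_inj; rewrite trmx_mul tr_adj_mx trmx_const adj_mx_const1.
by rewrite linearZ /= trmx_const.
Qed.

Lemma const1_mx_sqr : J *m J = n%:R *: J.
Proof.
apply/matrixP => i j; rewrite !mxE (eq_bigr (fun=> 1)) => [|k _]; last by rewrite !mxE mulr1.
by rewrite sumr_const card_ord mulr1.
Qed.

Lemma mxtrace_adj_mx : \tr A = 0.
Proof. by have [[_ adj_irr] _ _ _] := srg; apply: big1 => i _; rewrite mxE (negbTE (adj_irr i)). Qed.

Lemma mxtrace_adj_mx_sqr : \tr (A *m A) = n%:R * r%:R.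
Proof.
have [_ deg _ _] := srg; rewrite /mxtrace (eq_bigr (fun=> r%:R)) => [|i _].
  by rewrite sumr_const card_ord mulr_natl.
by rewrite adj_mx_sqrE -(deg i); congr _%:R; apply: eq_card => k; rewrite !inE andbb.
Qed.

Lemma adj_mx_sqr_srg : A *m A = (e%:R - f%:R) *: A + (r%:R - f%:R)%:M + f%:R *: J.
Proof.
have [[_ adj_irr] deg common_adj common_nonadj] := srg.
apply/matrixP => i j; rewrite adj_mx_sqrE !mxE; have [<- | i_neq_j] := eqVneq i j.
  rewrite (negbTE (adj_irr i)) -(deg i) mulr0 add0r mulr1n mulr1 subrK.
  by congr _%:R; apply: eq_card => k; rewrite !inE andbb.
rewrite mulr0n addr0 mulr1; case: (boolP (adj i j)) => [adj_ij | nadj_ij].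
  by rewrite common_adj // mulr1 subrK.
by rewrite common_nonadj // mulr0 add0r.
Qed.

Lemma srg_parameter_identity : (0 < n)%N ->
  r%:R ^+ 2 - (e%:R - f%:R) * r%:R - (r%:R - f%:R) = n%:R * f%:R :> R.
Proof.
move=> n_gt0; pose i0 : 'I_n := Ordinal n_gt0.
have := congr1 (fun M => (M *m J) i0 i0) adj_mx_sqr_srg.
rewrite -mulmxA adj_mx_const1 -scalemxAr adj_mx_const1 !mulmxDl -!scalemxAl.
rewrite adj_mx_const1 mul_scalar_mx const1_mx_sqr !mxE !mulr1 expr2 => ->; ring.
Qed.

Lemma srg_adj_mx_annihilator :
  (A *m A - (e%:R - f%:R) *: A - (r%:R - f%:R)%:M) *m (A - r%:R%:M) = 0.
Proof.
rewrite adj_mx_sqr_srg -addrA -opprD [_ + f%:R *: J]addrC addrK -scalemxAl mulmxBr const1_adj_mx.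
by rewrite mul_mx_scalar subrr scaler0.
Qed.

End StronglyRegularGraph.

Theorem theorem3p1 (R : rcfType) (n : nat) (adj : rel 'I_n) (r e f : nat)
  (s : seq R) :
  strongly_regular adj r e f -> (3 <= n)%N ->
  sorted_spectrum (adj_mx R adj) s ->
  s`_2 < n%:R / 3.
Proof.
move=> srg n_ge3 [s_sorted char_A]; have n_gt0 : (0 < n)%N := ltnW (ltnW n_ge3).
have [f' srg' f'_le_r] := strongly_regular_f_le_deg srg.
have b_eq : (e%:Z - f'%:Z)%:~R = e%:R - f'%:R :> R by rewrite rmorphB /= !pmulrn.
apply: (@spectrum_nth2_lt R n r f' (e%:Z - f'%:Z) s) => //.
- exact: size_spectrum char_A.
- exact: strongly_regular_deg_lt srg n_gt0.
- by rewrite (sum_spectrum char_A) (mxtrace_adj_mx srg).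
- by rewrite (sum_sqr_spectrum char_A) (mxtrace_adj_mx_sqr srg).
- by rewrite b_eq (srg_parameter_identity srg') // n_gt0.
move=> x x_in_s; rewrite b_eq.
apply: eigenvalue_root_cubic (srg_adj_mx_annihilator srg' R) _.
by rewrite eigenvalue_root_char char_A root_prod_XsubC.
Qed.
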